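(* Let $(\mathfrak{g},[\cdot,\cdot]_{\mathfrak{g}},\phi_{\mathfrak{g}})$ be a finite-dimensional weakly involutive Hom-Lie algebra and $(V,\beta,\rho)$ a weakly involutive representation ($V$ finite-dimensional) satisfying $\rho(\phi_{\mathfrak g}(x))\beta^2=\rho(\phi_{\mathfrak g}(x))$ for all $x\in\mathfrak g$. Let $T:V\to\mathfrak g$ be an $\mathcal O$-operator associated to $(V,\beta,\rho)$. Then there is a coboundary Hom-Lie bialgebra structure on $\mathfrak g\ltimes_{\rho^\circ}V^*$ induced by $r=\overline T-\sigma(\overline T)$, i.e. with cobracket $\Delta(u)=(\mathrm{ad}_u\otimes\phi_d+\phi_d\otimes\mathrm{ad}_u)r$, where $\phi_d=\phi_{\mathfrak g}\oplus\beta^*$.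
   Context: A Hom-Lie algebra $(\mathfrak{h},[\cdot,\cdot]_{\mathfrak{h}},\phi_{\mathfrak{h}})$: skew-symmetric bilinear bracket and linear map with $\phi_{\mathfrak h}[x,y]=[\phi_{\mathfrak h}x,\phi_{\mathfrak h}y]$ and $[\phi_{\mathfrak h}(x),[y,z]]+[\phi_{\mathfrak h}(y),[z,x]]+[\phi_{\mathfrak h}(z),[x,y]]=0$; weakly involutive if $[\phi_{\mathfrak h}^2(x),y]=[x,y]$ for all $x,y$. $\mathrm{ad}_zy=[z,y]$. A representation $(V,\beta,\rho)$ of $\mathfrak g$: $\beta\in\mathfrak{gl}(V)$, $\rho:\mathfrak g\to\mathfrak{gl}(V)$ with $\rho(\phi_{\mathfrak g}(x))\beta=\beta\rho(x)$ and $\rho([x,y]_{\mathfrak g})\beta=\rho(\phi_{\mathfrak g}(x))\rho(y)-\rho(\phi_{\mathfrak g}(y))\rho(x)$; weakly involutive if $\rho(\phi_{\mathfrak g}^2(x))=\rho(x)$. $\rho^\circ:\mathfrak g\to\mathfrak{gl}(V^* )$, $\langle\rho^\circ(x)\xi,v\rangle=-\langle\xi,\rho(\phi_{\mathfrak g}(x))v\rangle$. $\mathfrak g\ltimes_{\rho^\circ}V^*$ is $\mathfrak g\oplus V^*$ with bracket $[(x,\xi),(y,\eta)]=([x,y]_{\mathfrak g},\rho^\circ(x)\eta-\rho^\circ(y)\xi)$ and twisting map $\phi_{\mathfrak g}\oplus\beta^*$. An $\mathcal O$-operator associated to $(V,\beta,\rho)$ is a linear $T:V\to\mathfrak g$ with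 $T\beta=\phi_{\mathfrak g}T$ and $[T(u),T(v)]_{\mathfrak g}=T(\rho(T(u))v-\rho(T(v))u)$. With a basis $\{v_i\}$ of $V$ and dual basis $\{v^i\}$, $\overline T=\sum_iv^i\otimes T(v_i)$; $\sigma$ is the flip. A Hom-Lie bialgebra $(\mathfrak h,\Delta)$ (finite-dimensional): a weakly involutive Hom-Lie algebra $\mathfrak h$ with $\Delta:\mathfrak h\to\mathfrak h\otimes\mathfrak h$ such that $\mathfrak h^*$ with bracket $\langle[a,b],x\rangle=\langle\Delta(x),a\otimes b\rangle$ and map $\phi_{\mathfrak h}^*$ is a weakly involutive Hom-Lie algebra and $\Delta[x,y]=\mathrm{ad}_{\phi_{\mathfrak h}(x)}\Delta(y)-\mathrm{ad}_{\phi_{\mathfrak h}(y)}\Delta(x)$, where $\mathrm{ad}_zt=(\mathrm{ad}_z\otimes\phi_{\mathfrak h}+\phi_{\mathfrak h}\otimes\mathrm{ad}_z)t$ for $t\in\mathfrak h\otimes\mathfrak h$. It is coboundary if $\Delta(x)=\mathrm{ad}_xr$ for some $r$ with $(\phi_{\mathfrak h}\otimes\mathrm{Id})r=(\mathrm{Id}\otimes\phi_{\mathfrak h})r$. *)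

(* Finite-dimensional spaces are modelled in coordinates:
   a space of dimension n is 'rV[K]_n, the tensor square is 'M[K]_(n,n)
   (entry t i j = coefficient of e_i (x) e_j), linear maps are functions
   with an explicit linearity hypothesis, the dual of 'rV_m is 'rV_m with the
   dual basis given by the standard basis (pairing = sum_i xi_i v_i). *)
From HB Require Import structures.
From mathcomp Require Import all_boot all_order all_algebra.
Set Implicit Arguments. Unset Strict Implicit. Unset Printing Implicit Defensive.
Import GRing.Theory.
Local Open Scope ring_scope.

Section HomLieDefs.
Variable K : fieldType.

Definition lin_map (U W : lmodType K) (f : U -> W) :=
  forall (a : K) (x y : U), f (a *: x + y) = a *: f x + f y.

Definition bilin n (br : 'rV[K]_n -> 'rV[K]_n -> 'rV[K]_n) :=
  (forall z, lin_map (fun x => br x z)) /\ (forall z, lin_map (br z)).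

Definition HomLie n (br : 'rV[K]_n -> 'rV[K]_n -> 'rV[K]_n)
    (phi : 'rV[K]_n -> 'rV[K]_n) :=
  [/\ bilin br, lin_map phi,
      forall x y, br x y = - br y x,
      forall x y, phi (br x y) = br (phi x) (phi y) &
      forall x y z, br (phi x) (br y z) + br (phi y) (br z x)
                    + br (phi z) (br x y) = 0].

Definition weakly_inv n (br : 'rV[K]_n -> 'rV[K]_n -> 'rV[K]_n)
    (phi : 'rV[K]_n -> 'rV[K]_n) :=
  forall x y, br (phi (phi x)) y = br x y.

Definition bvec n (i : 'I_n) : 'rV[K]_n := delta_mx 0 i.
Definition pairing n (xi v : 'rV[K]_n) : K := \sum_i xi 0 i * v 0 i.
Definition dual_map n m (f : 'rV[K]_n -> 'rV[K]_m) (xi : 'rV[K]_m) : 'rV[K]_n :=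
  \row_k pairing xi (f (bvec k)).

Definition tens n (x y : 'rV[K]_n) : 'M[K]_(n, n) := x^T *m y.
Definition flip n (t : 'M[K]_(n, n)) : 'M[K]_(n, n) := t^T.
Definition tmap n (f g : 'rV[K]_n -> 'rV[K]_n) (t : 'M[K]_(n, n)) : 'M[K]_(n, n) :=
  \sum_i \sum_j t i j *: tens (f (bvec i)) (g (bvec j)).
Definition adT n (br : 'rV[K]_n -> 'rV[K]_n -> 'rV[K]_n)
    (phi : 'rV[K]_n -> 'rV[K]_n) (z : 'rV[K]_n) (t : 'M[K]_(n, n)) :=
  tmap (br z) phi t + tmap phi (br z) t.

(* bracket on h^* induced by Delta: <[a,b], x> = <Delta x, a (x) b> *)
Definition dual_br n (D : 'rV[K]_n -> 'M[K]_(n, n)) (a b : 'rV[K]_n) : 'rV[K]_n :=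
  \row_k \sum_i \sum_j D (bvec k) i j * a 0 i * b 0 j.

Definition HomLieBialg n (br : 'rV[K]_n -> 'rV[K]_n -> 'rV[K]_n)
    (phi : 'rV[K]_n -> 'rV[K]_n) (D : 'rV[K]_n -> 'M[K]_(n, n)) :=
  [/\ HomLie br phi /\ weakly_inv br phi, lin_map D,
      HomLie (dual_br D) (dual_map phi), weakly_inv (dual_br D) (dual_map phi) &
      forall x y, D (br x y) = adT br phi (phi x) (D y) - adT br phi (phi y) (D x)].

Definition coboundary_HLB n (br : 'rV[K]_n -> 'rV[K]_n -> 'rV[K]_n)
    (phi : 'rV[K]_n -> 'rV[K]_n) (D : 'rV[K]_n -> 'M[K]_(n, n)) (r : 'M[K]_(n, n)) :=
  [/\ HomLieBialg br phi D, forall x, D x = adT br phi x r &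
      tmap phi id r = tmap id phi r].

Definition HomLieRep n m (br : 'rV[K]_n -> 'rV[K]_n -> 'rV[K]_n)
    (phi : 'rV[K]_n -> 'rV[K]_n) (beta : 'rV[K]_m -> 'rV[K]_m)
    (rho : 'rV[K]_n -> 'rV[K]_m -> 'rV[K]_m) :=
  [/\ lin_map beta, forall x, lin_map (rho x),
      forall (a : K) x y v, rho (a *: x + y) v = a *: rho x v + rho y v,
      forall x v, rho (phi x) (beta v) = beta (rho x v) &
      forall x y v, rho (br x y) (beta v)
                    = rho (phi x) (rho y v) - rho (phi y) (rho x v)].

Definition weakly_inv_rep n m (phi : 'rV[K]_n -> 'rV[K]_n)
    (rho : 'rV[K]_n -> 'rV[K]_m -> 'rV[K]_m) :=
  forall x v, rho (phi (phi x)) v = rho x v.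

Definition O_operator n m (br : 'rV[K]_n -> 'rV[K]_n -> 'rV[K]_n)
    (phi : 'rV[K]_n -> 'rV[K]_n) (beta : 'rV[K]_m -> 'rV[K]_m)
    (rho : 'rV[K]_n -> 'rV[K]_m -> 'rV[K]_m) (T : 'rV[K]_m -> 'rV[K]_n) :=
  [/\ lin_map T, forall v, T (beta v) = phi (T v) &
      forall u v, br (T u) (T v) = T (rho (T u) v - rho (T v) u)].

Definition rho_circ n m (phi : 'rV[K]_n -> 'rV[K]_n)
    (rho : 'rV[K]_n -> 'rV[K]_m -> 'rV[K]_m) (x : 'rV[K]_n) (xi : 'rV[K]_m)
  : 'rV[K]_m := \row_k - pairing xi (rho (phi x) (bvec k)).

Definition sd_br n m (br : 'rV[K]_n -> 'rV[K]_n -> 'rV[K]_n)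
    (phi : 'rV[K]_n -> 'rV[K]_n) (rho : 'rV[K]_n -> 'rV[K]_m -> 'rV[K]_m)
    (u w : 'rV[K]_(n + m)) : 'rV[K]_(n + m) :=
  row_mx (br (lsubmx u) (lsubmx w))
         (rho_circ phi rho (lsubmx u) (rsubmx w)
          - rho_circ phi rho (lsubmx w) (rsubmx u)).

Definition sd_phi n m (phi : 'rV[K]_n -> 'rV[K]_n) (beta : 'rV[K]_m -> 'rV[K]_m)
    (u : 'rV[K]_(n + m)) : 'rV[K]_(n + m) :=
  row_mx (phi (lsubmx u)) (dual_map beta (rsubmx u)).

Definition Tbar n m (T : 'rV[K]_m -> 'rV[K]_n) : 'M[K]_(n + m, n + m) :=
  \sum_i tens (row_mx (0 : 'rV[K]_n) (bvec i)) (row_mx (T (bvec i)) (0 : 'rV[K]_m)).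

End HomLieDefs.

From HB Require Import structures.
From mathcomp Require Import all_boot all_order all_algebra.
From mathcomp Require Import ring.
Set Implicit Arguments. Unset Strict Implicit. Unset Printing Implicit Defensive.
Import GRing.Theory.
Local Open Scope ring_scope.

(* Every cobracket of the form Delta = ad r with r a phi_d-invariant tensor
   satisfies the compatibility condition, by the Hom-Jacobi identity; what has
   to be shown is that the bracket on d^* = g^* (+) V dual to Delta is a
   weakly involutive Hom-Lie algebra.  Pairing Delta with pairs of covectors
   computes this bracket: it is the semidirect product of the Hom-Lie algebra
   (V, [u, w]_T = rho(Tu)w - rho(Tw)u, beta), acting on g^* through the duals
   of L_u x = [x, phi T u] - phi T rho(phi x) u, with twist phi^*.  The
   O-operator identity [Tu, Tw] = T [u, w]_T is what makes [., .]_T a Hom-Lie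
   bracket and u |-> L_u^* a representation. *)

Ltac row_ring := apply/rowP => ?; rewrite !mxE; ring.

Section Coordinates.
Variable K : fieldType.
Implicit Types p q : nat.

Lemma pairingC p (a x : 'rV[K]_p) : pairing a x = pairing x a.
Proof. by apply: eq_bigr => i _; rewrite mulrC. Qed.

Lemma pairingDl p (a b x : 'rV[K]_p) :
  pairing (a + b) x = pairing a x + pairing b x.
Proof. by rewrite /pairing -big_split; apply: eq_bigr => i _; rewrite mxE mulrDl. Qed.

Lemma pairingZl p c (a x : 'rV[K]_p) : pairing (c *: a) x = c * pairing a x.
Proof. by rewrite /pairing mulr_sumr; apply: eq_bigr => i _; rewrite mxE mulrA. Qed.

Lemma pairingNl p (a x : 'rV[K]_p) : pairing (- a) x = - pairing a x.
Proof. by rewrite -scaleN1r pairingZl mulN1r. Qed.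

Lemma pairingBl p (a b x : 'rV[K]_p) :
  pairing (a - b) x = pairing a x - pairing b x.
Proof. by rewrite pairingDl pairingNl. Qed.

Lemma pairing0l p (x : 'rV[K]_p) : pairing 0 x = 0.
Proof. by rewrite -(scale0r 0) pairingZl mul0r. Qed.

Lemma pairingDr p (a b x : 'rV[K]_p) :
  pairing x (a + b) = pairing x a + pairing x b.
Proof. by rewrite !(pairingC x) pairingDl. Qed.

Lemma pairingZr p c (a x : 'rV[K]_p) : pairing x (c *: a) = c * pairing x a.
Proof. by rewrite !(pairingC x) pairingZl. Qed.

Lemma pairingNr p (a x : 'rV[K]_p) : pairing x (- a) = - pairing x a.
Proof. by rewrite !(pairingC x) pairingNl. Qed.

Lemma pairingBr p (a b x : 'rV[K]_p) :
  pairing x (a - b) = pairing x a - pairing x b.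
Proof. by rewrite !(pairingC x) pairingBl. Qed.

Lemma pairing0r p (x : 'rV[K]_p) : pairing x 0 = 0.
Proof. by rewrite pairingC pairing0l. Qed.

Lemma pairing_sumr p I (s : seq I) (P : pred I) (F : I -> 'rV[K]_p) x :
  pairing x (\sum_(i <- s | P i) F i) = \sum_(i <- s | P i) pairing x (F i).
Proof. by elim/big_rec2: _ => [|i y1 y2 _ <-]; rewrite ?pairing0r ?pairingDr. Qed.

Lemma bvecE p (k i : 'I_p) : bvec K k 0 i = (k == i)%:R.
Proof. by rewrite /bvec mxE eqxx /= eq_sym. Qed.

Lemma pairing_bvec p (a : 'rV[K]_p) k : pairing a (bvec K k) = a 0 k.
Proof.
rewrite /pairing (bigD1 k) //= bvecE eqxx mulr1 big1 ?addr0 // => i ik.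
by rewrite bvecE eq_sym (negbTE ik) mulr0.
Qed.

Lemma pairing_bvec_inj p (a b : 'rV[K]_p) :
  (forall k, pairing a (bvec K k) = pairing b (bvec K k)) -> a = b.
Proof. by move=> eq_ab; apply/rowP => k; rewrite -!pairing_bvec eq_ab. Qed.

Lemma pairing_inj p (a b : 'rV[K]_p) :
  (forall x, pairing a x = pairing b x) -> a = b.
Proof. by move=> eq_ab; apply: pairing_bvec_inj. Qed.

Lemma pairing_split p q (a x : 'rV[K]_(p + q)) :
  pairing a x = pairing (lsubmx a) (lsubmx x) + pairing (rsubmx a) (rsubmx x).
Proof.
by rewrite /pairing big_split_ord; congr (_ + _); apply: eq_bigr => i _; rewrite !mxE.
Qed.

Section LinearMap.
Variables (U W : lmodType K) (f : U -> W).
Hypothesis f_lin : lin_map f.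

Lemma lin0 : f 0 = 0.
Proof.
have := f_lin 1 0 0; rewrite !scale1r addr0 => f0_double.
by apply: (addIr (f 0)); rewrite add0r -f0_double.
Qed.

Lemma linD x y : f (x + y) = f x + f y.
Proof. by have := f_lin 1 x y; rewrite !scale1r. Qed.

Lemma linZ c x : f (c *: x) = c *: f x.
Proof. by have := f_lin c x 0; rewrite !addr0 lin0 addr0. Qed.

Lemma linN x : f (- x) = - f x.
Proof. by rewrite -scaleN1r linZ scaleN1r. Qed.

Lemma linB x y : f (x - y) = f x - f y.
Proof. by rewrite linD linN. Qed.

Lemma lin_sum I (s : seq I) (P : pred I) (F : I -> U) :
  f (\sum_(i <- s | P i) F i) = \sum_(i <- s | P i) f (F i).
Proof. by elim/big_rec2: _ => [|i y1 y2 _ <-]; rewrite ?lin0 ?linD. Qed.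

End LinearMap.

Lemma lin_coord_sum p (W : lmodType K) (f : 'rV[K]_p -> W) x :
  lin_map f -> f x = \sum_k x 0 k *: f (bvec K k).
Proof.
move=> f_lin; rewrite {1}(row_sum_delta x) (lin_sum f_lin).
by apply: eq_bigr => k _; apply: linZ.
Qed.

Lemma pairing_dual_map p q (f : 'rV[K]_p -> 'rV[K]_q) a x :
  lin_map f -> pairing (dual_map f a) x = pairing a (f x).
Proof.
move=> f_lin; rewrite (lin_coord_sum _ f_lin) pairing_sumr {1}/pairing.
by apply: eq_bigr => k _; rewrite mxE mulrC pairingZr.
Qed.

Lemma lin_dual_map p q (f : 'rV[K]_p -> 'rV[K]_q) : lin_map (dual_map f).
Proof. by move=> c a b; apply/rowP => k; rewrite !mxE pairingDl pairingZl. Qed.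

Lemma eq_dual_map p q (f g : 'rV[K]_p -> 'rV[K]_q) a :
  f =1 g -> dual_map f a = dual_map g a.
Proof. by move=> eq_fg; apply/rowP => k; rewrite !mxE eq_fg. Qed.

Lemma dual_map_comp p q s (f : 'rV[K]_p -> 'rV[K]_q) (g : 'rV[K]_q -> 'rV[K]_s) a :
  lin_map g -> dual_map f (dual_map g a) = dual_map (fun v => g (f v)) a.
Proof. by move=> g_lin; apply/rowP => k; rewrite !mxE pairing_dual_map. Qed.

Lemma dual_map_id p (a : 'rV[K]_p) : dual_map id a = a.
Proof. by apply/rowP => k; rewrite !mxE pairing_bvec. Qed.

Lemma dual_mapK p q (f : 'rV[K]_p -> 'rV[K]_q) u :
  lin_map f -> dual_map (dual_map f) u = f u.
Proof.
move=> f_lin; apply/rowP => k.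
by rewrite !mxE pairingC pairing_dual_map // pairingC pairing_bvec.
Qed.

Lemma dual_mapB p q (f g : 'rV[K]_p -> 'rV[K]_q) a :
  dual_map (fun v => f v - g v) a = dual_map f a - dual_map g a.
Proof. by apply/rowP => k; rewrite !mxE pairingBr. Qed.

Lemma dual_mapN p q (f : 'rV[K]_p -> 'rV[K]_q) a :
  dual_map (fun v => - f v) a = - dual_map f a.
Proof. by apply/rowP => k; rewrite !mxE pairingNr. Qed.

Lemma dual_map0 p q (a : 'rV[K]_q) : dual_map (fun _ : 'rV[K]_p => 0) a = 0.
Proof. by apply/rowP => k; rewrite !mxE pairing0r. Qed.

Lemma dual_map_row_mx p q s (f : 'rV[K]_s -> 'rV[K]_p) (g : 'rV[K]_s -> 'rV[K]_q) a :
  dual_map (fun y => row_mx (f y) (g y)) a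
  = dual_map f (lsubmx a) + dual_map g (rsubmx a).
Proof. by apply/rowP => k; rewrite !mxE pairing_split row_mxKl row_mxKr. Qed.

Lemma lsubmx_dual_map p q s (f : 'rV[K]_(p + q) -> 'rV[K]_s) a :
  lsubmx (dual_map f a) = dual_map (fun y => f (row_mx y 0)) a.
Proof. by apply/rowP => k; rewrite !mxE /bvec delta_mx_lshift. Qed.

Lemma rsubmx_dual_map p q s (f : 'rV[K]_(p + q) -> 'rV[K]_s) a :
  rsubmx (dual_map f a) = dual_map (fun y => f (row_mx 0 y)) a.
Proof. by apply/rowP => k; rewrite !mxE /bvec delta_mx_rshift. Qed.

Definition swap_blocks p q (u : 'rV[K]_(p + q)) : 'rV[K]_(q + p) :=
  row_mx (rsubmx u) (lsubmx u).

Lemma swap_blocksK p q : cancel (@swap_blocks p q) (@swap_blocks q p).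
Proof. by move=> u; rewrite /swap_blocks row_mxKl row_mxKr hsubmxK. Qed.

Lemma lin_swap_blocks p q : lin_map (@swap_blocks p q).
Proof. by move=> c u w; rewrite /swap_blocks !linearP /= scale_row_mx add_row_mx. Qed.

End Coordinates.

Section TensorPairing.
Variables (K : fieldType) (p : nat).
Implicit Types (s t : 'M[K]_(p, p)) (a b x y : 'rV[K]_p).

Definition tpair t a b : K := \sum_i \sum_j t i j * a 0 i * b 0 j.

Lemma tpairD s t a b : tpair (s + t) a b = tpair s a b + tpair t a b.
Proof.
rewrite /tpair -big_split; apply: eq_bigr => i _; rewrite -big_split.
by apply: eq_bigr => j _; rewrite mxE !mulrDl.
Qed.

Lemma tpairZ c t a b : tpair (c *: t) a b = c * tpair t a b.
Proof.
rewrite /tpair mulr_sumr; apply: eq_bigr => i _; rewrite mulr_sumr.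
by apply: eq_bigr => j _; rewrite mxE !mulrA.
Qed.

Lemma tpairB s t a b : tpair (s - t) a b = tpair s a b - tpair t a b.
Proof. by rewrite tpairD -scaleN1r tpairZ mulN1r. Qed.

Lemma tpair_sum I (r : seq I) (P : pred I) (F : I -> 'M[K]_(p, p)) a b :
  tpair (\sum_(i <- r | P i) F i) a b = \sum_(i <- r | P i) tpair (F i) a b.
Proof.
elim/big_rec2: _ => [|i y1 y2 _ <-]; last exact: tpairD.
by rewrite /tpair big1 // => i _; rewrite big1 // => j _; rewrite mxE !mul0r.
Qed.

Lemma tpairBl t a a' b : tpair t (a - a') b = tpair t a b - tpair t a' b.
Proof.
rewrite /tpair -sumrB; apply: eq_bigr => i _; rewrite -sumrB.
by apply: eq_bigr => j _; rewrite !mxE mulrBr mulrBl.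
Qed.

Lemma tpairBr t a b b' : tpair t a (b - b') = tpair t a b - tpair t a b'.
Proof.
rewrite /tpair -sumrB; apply: eq_bigr => i _; rewrite -sumrB.
by apply: eq_bigr => j _; rewrite !mxE mulrBr.
Qed.

Lemma tpair_tens x y a b : tpair (tens x y) a b = pairing a x * pairing b y.
Proof.
rewrite /tpair /pairing mulr_suml; apply: eq_bigr => i _.
rewrite mulr_sumr; apply: eq_bigr => j _.
rewrite /tens mxE big_ord1 mxE; ring.
Qed.

Lemma tpair_tmap f g t a b :
  tpair (tmap f g t) a b = tpair t (dual_map f a) (dual_map g b).
Proof.
rewrite /tmap tpair_sum; apply: eq_bigr => i _.
rewrite tpair_sum; apply: eq_bigr => j _.
by rewrite tpairZ tpair_tens !mxE mulrA.
Qed.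

Lemma tpair_adT br phi z t a b :
  tpair (adT br phi z t) a b
  = tpair t (dual_map (br z) a) (dual_map phi b)
    + tpair t (dual_map phi a) (dual_map (br z) b).
Proof. by rewrite /adT tpairD !tpair_tmap. Qed.

Lemma tpair_flip t a b : tpair (flip t) a b = tpair t b a.
Proof.
rewrite /tpair exchange_big /=; apply: eq_bigr => i _; apply: eq_bigr => j _.
by rewrite mxE -mulrA [_ * b 0 _]mulrC mulrA.
Qed.

Lemma tpair_bvec t i j : tpair t (bvec K i) (bvec K j) = t i j.
Proof.
rewrite /tpair (bigD1 i) //= [X in _ + X]big1 ?addr0 => [|k ki]; last first.
  by rewrite big1 // => l _; rewrite [bvec K i 0 k]bvecE eq_sym (negbTE ki) mulr0 mul0r.
rewrite (bigD1 j) //= [X in _ + X]big1 ?addr0 => [|k kj]; last first.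
  by rewrite [bvec K j 0 k]bvecE eq_sym (negbTE kj) mulr0.
by rewrite !bvecE !eqxx !mulr1.
Qed.

Lemma tpair_inj s t : (forall a b, tpair s a b = tpair t a b) -> s = t.
Proof. by move=> eq_st; apply/matrixP => i j; rewrite -!tpair_bvec eq_st. Qed.

End TensorPairing.

Lemma tpair_Tbar (K : fieldType) n m (T : 'rV[K]_m -> 'rV[K]_n) a b :
  lin_map T -> tpair (Tbar T) a b = pairing (lsubmx b) (T (rsubmx a)).
Proof.
move=> T_lin; rewrite /Tbar tpair_sum (lin_coord_sum _ T_lin) pairing_sumr.
apply: eq_bigr => i _; rewrite tpair_tens !pairing_split !row_mxKl !row_mxKr.
by rewrite !pairing0r add0r addr0 pairing_bvec pairingZr.
Qed.

Section HomLieTheory.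
Variables (K : fieldType) (n : nat).
Variables (br : 'rV[K]_n -> 'rV[K]_n -> 'rV[K]_n) (phi : 'rV[K]_n -> 'rV[K]_n).
Hypothesis HL : HomLie br phi.

Lemma lin_brl z : lin_map (fun x => br x z). Proof. by case: HL => [[]]. Qed.
Lemma lin_brr z : lin_map (br z). Proof. by case: HL => [[]]. Qed.
Lemma lin_phi : lin_map phi. Proof. by case: HL. Qed.
Lemma brC x y : br x y = - br y x. Proof. by case: HL. Qed.
Lemma phi_br x y : phi (br x y) = br (phi x) (phi y). Proof. by case: HL. Qed.
Lemma br_jacobi x y z :
  br (phi x) (br y z) + br (phi y) (br z x) + br (phi z) (br x y) = 0.
Proof. by case: HL. Qed.

Lemma brDl x y z : br (x + y) z = br x z + br y z. Proof. exact: (linD (lin_brl z)). Qed.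
Lemma brZl c x z : br (c *: x) z = c *: br x z. Proof. exact: (linZ (lin_brl z)). Qed.
Lemma brNl x z : br (- x) z = - br x z. Proof. exact: (linN (lin_brl z)). Qed.
Lemma brBl x y z : br (x - y) z = br x z - br y z. Proof. exact: (linB (lin_brl z)). Qed.
Lemma brDr x y z : br z (x + y) = br z x + br z y. Proof. exact: (linD (lin_brr z)). Qed.
Lemma brZr c x z : br z (c *: x) = c *: br z x. Proof. exact: (linZ (lin_brr z)). Qed.
Lemma brNr x z : br z (- x) = - br z x. Proof. exact: (linN (lin_brr z)). Qed.
Lemma br0r z : br z 0 = 0. Proof. exact: (lin0 (lin_brr z)). Qed.
Lemma phiD x y : phi (x + y) = phi x + phi y. Proof. exact: (linD lin_phi). Qed.
Lemma phiZ c x : phi (c *: x) = c *: phi x. Proof. exact: (linZ lin_phi). Qed.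
Lemma phiN x : phi (- x) = - phi x. Proof. exact: (linN lin_phi). Qed.
Lemma phiB x y : phi (x - y) = phi x - phi y. Proof. exact: (linB lin_phi). Qed.
Lemma phi0 : phi 0 = 0. Proof. exact: (lin0 lin_phi). Qed.

Hypothesis WI : weakly_inv br phi.

Lemma br_phi2l x y : br (phi (phi x)) y = br x y. Proof. exact: WI. Qed.

Lemma br_phi2r x y : br x (phi (phi y)) = br x y.
Proof. by rewrite brC br_phi2l -brC. Qed.

Lemma phi2_br x y : phi (phi (br x y)) = br x y.
Proof. by rewrite !phi_br br_phi2l br_phi2r. Qed.

End HomLieTheory.

Section RepresentationTheory.
Variables (K : fieldType) (n m : nat).
Variables (br : 'rV[K]_n -> 'rV[K]_n -> 'rV[K]_n) (phi : 'rV[K]_n -> 'rV[K]_n).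
Variables (beta : 'rV[K]_m -> 'rV[K]_m) (rho : 'rV[K]_n -> 'rV[K]_m -> 'rV[K]_m).
Hypothesis HR : HomLieRep br phi beta rho.

Lemma lin_beta : lin_map beta. Proof. by case: HR. Qed.
Lemma lin_rhor x : lin_map (rho x). Proof. by case: HR. Qed.
Lemma lin_rhol v : lin_map (fun x => rho x v).
Proof. by case: HR => _ _ rho_lin _ _ c x y; apply: rho_lin. Qed.
Lemma rho_phi_beta x v : rho (phi x) (beta v) = beta (rho x v). Proof. by case: HR. Qed.
Lemma rho_br x y v :
  rho (br x y) (beta v) = rho (phi x) (rho y v) - rho (phi y) (rho x v).
Proof. by case: HR. Qed.

Lemma rhoDl x y v : rho (x + y) v = rho x v + rho y v. Proof. exact: (linD (lin_rhol v)). Qed.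
Lemma rhoZl c x v : rho (c *: x) v = c *: rho x v. Proof. exact: (linZ (lin_rhol v)). Qed.
Lemma rhoBl x y v : rho (x - y) v = rho x v - rho y v. Proof. exact: (linB (lin_rhol v)). Qed.
Lemma rho0l v : rho 0 v = 0. Proof. exact: (lin0 (lin_rhol v)). Qed.
Lemma rhoDr x y v : rho v (x + y) = rho v x + rho v y. Proof. exact: (linD (lin_rhor v)). Qed.
Lemma rhoZr c x v : rho v (c *: x) = c *: rho v x. Proof. exact: (linZ (lin_rhor v)). Qed.
Lemma rhoBr x y v : rho v (x - y) = rho v x - rho v y. Proof. exact: (linB (lin_rhor v)). Qed.
Lemma rho0r v : rho v 0 = 0. Proof. exact: (lin0 (lin_rhor v)). Qed.
Lemma betaD x y : beta (x + y) = beta x + beta y. Proof. exact: (linD lin_beta). Qed.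
Lemma betaZ c x : beta (c *: x) = c *: beta x. Proof. exact: (linZ lin_beta). Qed.
Lemma betaB x y : beta (x - y) = beta x - beta y. Proof. exact: (linB lin_beta). Qed.

End RepresentationTheory.

Section Transport.
Variables (K : fieldType) (p q : nat).
Variables (f : 'rV[K]_p -> 'rV[K]_q) (g : 'rV[K]_q -> 'rV[K]_p).
Variables (br : 'rV[K]_q -> 'rV[K]_q -> 'rV[K]_q) (phi : 'rV[K]_q -> 'rV[K]_q).
Variables (br' : 'rV[K]_p -> 'rV[K]_p -> 'rV[K]_p) (phi' : 'rV[K]_p -> 'rV[K]_p).
Hypotheses (gK : cancel g f).
Hypotheses (br'E : forall x y, br' x y = g (br (f x) (f y))).
Hypotheses (phi'E : forall x, phi' x = g (phi (f x))).

Lemma HomLie_transport : lin_map f -> lin_map g -> HomLie br phi -> HomLie br' phi'.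
Proof.
move=> f_lin g_lin [[brl brr] phi_lin brC phi_br jacobi]; split; [split|..].
- move=> z c x y; rewrite !br'E f_lin.
  by have /= -> := brl (f z) c (f x) (f y); apply: g_lin.
- move=> z c x y; rewrite !br'E f_lin.
  by have /= -> := brr (f z) c (f x) (f y); apply: g_lin.
- by move=> c x y; rewrite !phi'E f_lin phi_lin g_lin.
- by move=> x y; rewrite !br'E brC (linN g_lin).
- by move=> x y; rewrite !phi'E !br'E !gK phi_br.
- by move=> x y z; rewrite !phi'E !br'E !gK -!(linD g_lin) jacobi (lin0 g_lin).
Qed.

Lemma weakly_inv_transport : weakly_inv br phi -> weakly_inv br' phi'.
Proof. by move=> WI x y; rewrite !br'E !phi'E !gK WI. Qed.

End Transport.

Section SemidirectProduct.
Variables (K : fieldType) (n m : nat).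
Variables (br : 'rV[K]_n -> 'rV[K]_n -> 'rV[K]_n) (phi : 'rV[K]_n -> 'rV[K]_n).
Variables (beta : 'rV[K]_m -> 'rV[K]_m) (rho : 'rV[K]_n -> 'rV[K]_m -> 'rV[K]_m).

Definition semidirect_br (u w : 'rV[K]_(n + m)) : 'rV[K]_(n + m) :=
  row_mx (br (lsubmx u) (lsubmx w))
         (rho (lsubmx u) (rsubmx w) - rho (lsubmx w) (rsubmx u)).

Definition semidirect_phi (u : 'rV[K]_(n + m)) : 'rV[K]_(n + m) :=
  row_mx (phi (lsubmx u)) (beta (rsubmx u)).

Hypotheses (HL : HomLie br phi) (HR : HomLieRep br phi beta rho).

Lemma semidirect_HomLie : HomLie semidirect_br semidirect_phi.
Proof.
split; [split|..].
- move=> z c u w; rewrite /semidirect_br !linearP /= scale_row_mx add_row_mx.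
  rewrite (brDl HL) (brZl HL) (rhoDl HR) (rhoZl HR) (rhoDr HR) (rhoZr HR).
  by congr row_mx; row_ring.
- move=> z c u w; rewrite /semidirect_br !linearP /= scale_row_mx add_row_mx.
  rewrite (brDr HL) (brZr HL) (rhoDl HR) (rhoZl HR) (rhoDr HR) (rhoZr HR).
  by congr row_mx; row_ring.
- move=> c u w; rewrite /semidirect_phi !linearP /= scale_row_mx add_row_mx.
  by rewrite (phiD HL) (phiZ HL) (betaD HR) (betaZ HR).
- by move=> u w; rewrite /semidirect_br opp_row_mx opprB -(brC HL).
- move=> u w; rewrite /semidirect_br /semidirect_phi !row_mxKl !row_mxKr.
  by rewrite (phi_br HL) (betaB HR) !(rho_phi_beta HR).
- move=> u1 u2 u3; rewrite /semidirect_br /semidirect_phi !row_mxKl !row_mxKr.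
  rewrite !add_row_mx -row_mx0 (br_jacobi HL) !(rho_br HR) !(rhoBr HR).
  by congr row_mx; row_ring.
Qed.

Hypotheses (WI : weakly_inv br phi) (WR : weakly_inv_rep phi rho).
Hypothesis rho_beta2 : forall x v, rho x (beta (beta v)) = rho x v.

Lemma semidirect_weakly_inv : weakly_inv semidirect_br semidirect_phi.
Proof.
by move=> u w; rewrite /semidirect_br /semidirect_phi !row_mxKl !row_mxKr WI WR rho_beta2.
Qed.

End SemidirectProduct.

Section CoboundaryCocycle.
Variables (K : fieldType) (p : nat).
Variables (br : 'rV[K]_p -> 'rV[K]_p -> 'rV[K]_p) (phi : 'rV[K]_p -> 'rV[K]_p).
Variable r : 'M[K]_(p, p).
Hypotheses (HL : HomLie br phi) (WI : weakly_inv br phi).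
Hypothesis r_phi : tmap phi id r = tmap id phi r.

Local Notation ad_dual z := (dual_map (br z)).
Local Notation phi_dual := (dual_map phi).

Lemma tpair_r_phi a b : tpair r (phi_dual a) b = tpair r a (phi_dual b).
Proof. by have := congr1 (fun t => tpair t a b) r_phi; rewrite /= !tpair_tmap !dual_map_id. Qed.

Lemma ad_dual_phi y a : ad_dual y (phi_dual a) = phi_dual (ad_dual (phi y) a).
Proof.
rewrite !dual_map_comp; try solve [exact: (lin_phi HL) | exact: (lin_brr HL)].
by apply: eq_dual_map => v; rewrite (phi_br HL).
Qed.

Lemma ad_dual_br x y a :
  ad_dual y (ad_dual (phi x) a) - ad_dual x (ad_dual (phi y) a)
  = phi_dual (ad_dual (br x y) a).
Proof.
rewrite !dual_map_comp; try solve [exact: (lin_phi HL) | exact: (lin_brr HL)].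
rewrite -dual_mapB.
apply: eq_dual_map => v; have := br_jacobi HL x y v.
rewrite [br v x](brC HL) (brNr HL) [br (phi v) _](brC HL) => jacobi.
by rewrite -[RHS]add0r -{1}jacobi; row_ring.
Qed.

Lemma phi_dual2_ad_dual z a : phi_dual (phi_dual (ad_dual z a)) = ad_dual z a.
Proof.
rewrite !dual_map_comp; try solve [exact: (lin_phi HL) | exact: (lin_brr HL)].
by apply: eq_dual_map => v; rewrite (br_phi2r HL WI).
Qed.

Lemma adT_cocycle x y :
  adT br phi (br x y) r
  = adT br phi (phi x) (adT br phi y r) - adT br phi (phi y) (adT br phi x r).
Proof.
apply: tpair_inj => a b; rewrite tpairB !tpair_adT !ad_dual_phi.
have left_part : tpair r (ad_dual y (ad_dual (phi x) a)) (phi_dual (phi_dual b))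
    - tpair r (ad_dual x (ad_dual (phi y) a)) (phi_dual (phi_dual b))
    = tpair r (ad_dual (br x y) a) (phi_dual b).
  by rewrite -tpairBl ad_dual_br tpair_r_phi -tpair_r_phi -tpair_r_phi phi_dual2_ad_dual.
have right_part : tpair r (phi_dual (phi_dual a)) (ad_dual y (ad_dual (phi x) b))
    - tpair r (phi_dual (phi_dual a)) (ad_dual x (ad_dual (phi y) b))
    = tpair r (phi_dual a) (ad_dual (br x y) b).
  by rewrite -tpairBr ad_dual_br -tpair_r_phi -{2}(phi_dual2_ad_dual (br x y) b) !tpair_r_phi.
rewrite -left_part -right_part; ring.
Qed.

End CoboundaryCocycle.

Section DualRepresentation.
Variables (K : fieldType) (n m : nat).
Variables (br : 'rV[K]_n -> 'rV[K]_n -> 'rV[K]_n) (phi : 'rV[K]_n -> 'rV[K]_n).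
Variables (beta : 'rV[K]_m -> 'rV[K]_m) (rho : 'rV[K]_n -> 'rV[K]_m -> 'rV[K]_m).
Hypotheses (HL : HomLie br phi) (HR : HomLieRep br phi beta rho).
Hypothesis WR : weakly_inv_rep phi rho.
Hypothesis rho_phi_beta2 : forall x v, rho (phi x) (beta (beta v)) = rho (phi x) v.

Local Notation rho_c := (rho_circ phi rho).

Lemma rho_beta2 x v : rho x (beta (beta v)) = rho x v.
Proof. by rewrite -(WR x) rho_phi_beta2 WR. Qed.

Lemma beta2_rho x v : beta (beta (rho x v)) = rho x v.
Proof. by rewrite -!(rho_phi_beta HR) rho_phi_beta2 WR. Qed.

Lemma rho_circE x xi : rho_c x xi = - dual_map (rho (phi x)) xi.
Proof. by apply/rowP => k; rewrite !mxE. Qed.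

Lemma pairing_rho_circ x xi v : pairing (rho_c x xi) v = - pairing xi (rho (phi x) v).
Proof. by rewrite rho_circE pairingNl pairing_dual_map //; exact: (lin_rhor HR _). Qed.

Lemma rho_circ_rep : HomLieRep br phi (dual_map beta) rho_c.
Proof.
have pairing_beta xi v : pairing (dual_map beta xi) v = pairing xi (beta v).
  exact: (pairing_dual_map _ _ (lin_beta HR)).
split.
- exact: lin_dual_map.
- by move=> x c a b; rewrite !rho_circE (lin_dual_map _ c a b) opprD scalerN.
- move=> c x y xi; apply: pairing_inj => v.
  rewrite pairingDl pairingZl !pairing_rho_circ (phiD HL) (phiZ HL).
  by rewrite (rhoDl HR) (rhoZl HR) pairingDr pairingZr mulrN opprD.
- move=> x xi; apply: pairing_inj => v.
  by rewrite pairing_rho_circ !pairing_beta pairing_rho_circ WR (rho_phi_beta HR).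
- move=> x y xi; apply: pairing_inj => v.
  rewrite pairingBl !pairing_rho_circ pairing_beta -(rho_phi_beta HR) !WR.
  by rewrite (rho_br HR) pairingBr; ring.
Qed.

Lemma rho_circ_weakly_inv : weakly_inv_rep phi rho_c.
Proof. by move=> x xi; rewrite !rho_circE; congr (- _); apply: eq_dual_map => v; rewrite WR. Qed.

Lemma rho_circ_beta2 x xi : rho_c x (dual_map beta (dual_map beta xi)) = rho_c x xi.
Proof.
apply: pairing_inj => v; rewrite !pairing_rho_circ !pairing_dual_map ?beta2_rho //.
all: exact: (lin_beta HR).
Qed.

Lemma sd_HomLie : HomLie (sd_br br phi rho) (sd_phi phi beta).
Proof. exact: semidirect_HomLie HL rho_circ_rep. Qed.

Lemma sd_weakly_inv : weakly_inv br phi -> weakly_inv (sd_br br phi rho) (sd_phi phi beta).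
Proof. by move=> WI; apply: semidirect_weakly_inv WI rho_circ_weakly_inv rho_circ_beta2. Qed.

Lemma lsubmx_dual_sd_phi a :
  lsubmx (dual_map (sd_phi phi beta) a) = dual_map phi (lsubmx a).
Proof.
rewrite lsubmx_dual_map (@eq_dual_map _ _ _ _ (fun y => row_mx (phi y) 0)).
  by rewrite dual_map_row_mx dual_map0 addr0.
by move=> y; rewrite /sd_phi row_mxKl row_mxKr (lin0 (lin_dual_map _)).
Qed.

Lemma rsubmx_dual_sd_phi a : rsubmx (dual_map (sd_phi phi beta) a) = beta (rsubmx a).
Proof.
rewrite rsubmx_dual_map (@eq_dual_map _ _ _ _ (fun y => row_mx 0 (dual_map beta y))).
  by rewrite dual_map_row_mx dual_map0 add0r dual_mapK //; exact: (lin_beta HR).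
by move=> y; rewrite /sd_phi row_mxKl row_mxKr (phi0 HL).
Qed.

Lemma lsubmx_dual_sd_ad x a :
  lsubmx (dual_map (sd_br br phi rho x) a)
  = dual_map (br (lsubmx x)) (lsubmx a)
    - dual_map (fun y => rho_c y (rsubmx x)) (rsubmx a).
Proof.
rewrite lsubmx_dual_map -dual_mapN -dual_map_row_mx; apply: eq_dual_map => y.
by rewrite /sd_br row_mxKl row_mxKr (rho0r rho_circ_rep) sub0r.
Qed.

Lemma rsubmx_dual_sd_ad x a :
  rsubmx (dual_map (sd_br br phi rho x) a) = - rho (phi (lsubmx x)) (rsubmx a).
Proof.
rewrite rsubmx_dual_map.
rewrite (@eq_dual_map _ _ _ _ (fun y => row_mx 0 (- dual_map (rho (phi (lsubmx x))) y))).
  by rewrite dual_map_row_mx dual_map0 add0r dual_mapN dual_mapK //; exact: (lin_rhor HR _).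
by move=> y; rewrite /sd_br row_mxKl row_mxKr (br0r HL) (rho0l rho_circ_rep) subr0 rho_circE.
Qed.

End DualRepresentation.

Section OOperatorBialgebra.
Variables (K : fieldType) (n m : nat).
Variables (br : 'rV[K]_n -> 'rV[K]_n -> 'rV[K]_n) (phi : 'rV[K]_n -> 'rV[K]_n).
Variables (beta : 'rV[K]_m -> 'rV[K]_m) (rho : 'rV[K]_n -> 'rV[K]_m -> 'rV[K]_m).
Variable T : 'rV[K]_m -> 'rV[K]_n.
Hypotheses (HL : HomLie br phi) (WI : weakly_inv br phi).
Hypotheses (HR : HomLieRep br phi beta rho) (WR : weakly_inv_rep phi rho).
Hypothesis rho_phi_beta2 : forall x v, rho (phi x) (beta (beta v)) = rho (phi x) v.
Hypothesis HO : O_operator br phi beta rho T.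

Definition O_br u w := rho (T u) w - rho (T w) u.

Lemma lin_T : lin_map T. Proof. by case: HO. Qed.
Lemma T_beta v : T (beta v) = phi (T v). Proof. by case: HO. Qed.
Lemma br_T u w : br (T u) (T w) = T (O_br u w). Proof. by case: HO. Qed.

Lemma TD u w : T (u + w) = T u + T w. Proof. exact: (linD lin_T). Qed.
Lemma TZ c u : T (c *: u) = c *: T u. Proof. exact: (linZ lin_T). Qed.
Lemma TN u : T (- u) = - T u. Proof. exact: (linN lin_T). Qed.
Lemma TB u w : T (u - w) = T u - T w. Proof. exact: (linB lin_T). Qed.

Lemma phi2_T_rho x w : phi (phi (T (rho x w))) = T (rho x w).
Proof. by rewrite -!T_beta (beta2_rho HR WR rho_phi_beta2). Qed.

Lemma O_br_HomLie : HomLie O_br beta.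
Proof.
split; [split|..].
- move=> z c u w; rewrite /O_br TD TZ (rhoDl HR) (rhoZl HR) (rhoDr HR) (rhoZr HR).
  row_ring.
- move=> z c u w; rewrite /O_br TD TZ (rhoDl HR) (rhoZl HR) (rhoDr HR) (rhoZr HR).
  row_ring.
- exact: (lin_beta HR).
- by move=> u w; rewrite /O_br opprB.
- by move=> u w; rewrite /O_br (betaB HR) -!(rho_phi_beta HR) !T_beta.
- move=> u w z; rewrite /O_br -!br_T !(rho_br HR) !T_beta !(rhoBr HR); row_ring.
Qed.

Lemma O_br_weakly_inv : weakly_inv O_br beta.
Proof. by move=> u w; rewrite /O_br !T_beta WR (rho_beta2 WR rho_phi_beta2). Qed.

Definition O_act u x := br x (phi (T u)) - phi (T (rho (phi x) u)).

Definition O_coact u xi := dual_map (O_act u) xi.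

Lemma lin_O_act u : lin_map (O_act u).
Proof.
move=> c x y; rewrite /O_act (brDl HL) (brZl HL) !(phiD HL) !(phiZ HL).
rewrite (rhoDl HR) (rhoZl HR) TD TZ (phiD HL) (phiZ HL); row_ring.
Qed.

Lemma O_act_linl c u u' x : O_act (c *: u + u') x = c *: O_act u x + O_act u' x.
Proof.
rewrite /O_act TD TZ (phiD HL) (phiZ HL) (brDr HL) (brZr HL) (rhoDr HR) (rhoZr HR).
rewrite TD TZ (phiD HL) (phiZ HL); row_ring.
Qed.

Lemma phi_O_act_beta u x : phi (O_act (beta u) x) = O_act u (phi x).
Proof.
rewrite /O_act (phiB HL) (phi_br HL) T_beta (br_phi2r HL WI) (rho_phi_beta HR).
by rewrite T_beta phi2_T_rho WR.
Qed.

Lemma O_act_beta w x : O_act (beta w) x = br x (T w) - phi (phi (T (rho x w))).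
Proof. by rewrite /O_act T_beta (br_phi2r HL WI) (rho_phi_beta HR) T_beta. Qed.

Lemma O_act_O_act_beta w z x :
  O_act z (O_act (beta w) x)
  = br (br x (T w)) (phi (T z)) + T (rho (phi (T z)) (rho x w))
    - T (rho (phi x) (rho (T w) z)) + T (rho (phi (T w)) (rho x z)).
Proof.
rewrite O_act_beta /O_act (brBl HL) (br_phi2l WI).
have br_T_rho : br (T (rho x w)) (phi (T z))
    = T (rho (T (rho x w)) (beta z)) - T (rho (phi (T z)) (rho x w)).
  by rewrite -T_beta br_T TB.
have phi_T_rho_br : phi (T (rho (br (phi x) (phi (T w))) z))
    = T (rho (phi x) (rho (T w) z)) - T (rho (phi (T w)) (rho x z)).
  by rewrite -T_beta -(rho_phi_beta HR) (phi_br HL) (br_phi2l WI) (br_phi2r HL WI) (rho_br HR) TB.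
have phi_T_rho_phi : phi (T (rho (phi (T (rho x w))) z)) = T (rho (T (rho x w)) (beta z)).
  by rewrite -T_beta -(rho_phi_beta HR) WR.
rewrite br_T_rho (phiB HL) (phi_br HL) phi2_T_rho (rhoBl HR) TB (phiB HL).
rewrite phi_T_rho_br phi_T_rho_phi; row_ring.
Qed.

Lemma phi_O_act_O_br w z x :
  phi (O_act (O_br w z) x) = O_act z (O_act (beta w) x) - O_act w (O_act (beta z) x).
Proof.
rewrite !O_act_O_act_beta /O_act /O_br -br_T (phiB HL) (phi_br HL) (br_phi2r HL WI).
rewrite phi2_T_rho (rhoBr HR) TB.
have := br_jacobi HL x (T w) (T z).
rewrite [br (phi (T z)) _](brC HL) [br (phi (T w)) _](brC HL) [br (T z) x](brC HL) (brNl HL).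
by move=> jacobi; rewrite -[LHS]subr0 -{1}jacobi; row_ring.
Qed.

Lemma O_coact_rep : HomLieRep O_br beta (dual_map phi) O_coact.
Proof.
split.
- exact: lin_dual_map.
- by move=> u; apply: lin_dual_map.
- by move=> c u u' xi; apply/rowP => k; rewrite !mxE O_act_linl pairingDr pairingZr.
- move=> u xi; rewrite /O_coact (dual_map_comp _ _ (lin_phi HL)).
  by rewrite (dual_map_comp _ _ (lin_O_act u)); apply: eq_dual_map => x; rewrite phi_O_act_beta.
- move=> u w xi; rewrite /O_coact (dual_map_comp _ _ (lin_phi HL)).
  rewrite !(dual_map_comp _ _ (lin_O_act _)) -dual_mapB.
  by apply: eq_dual_map => x; rewrite phi_O_act_O_br.
Qed.

Lemma O_coact_weakly_inv : weakly_inv_rep beta O_coact.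
Proof.
move=> u xi; apply: eq_dual_map => x.
by rewrite /O_act !T_beta (br_phi2r HL WI) rho_phi_beta2.
Qed.

Lemma O_coact_phi2 u xi : O_coact u (dual_map phi (dual_map phi xi)) = O_coact u xi.
Proof.
rewrite /O_coact !(dual_map_comp _ _ (lin_phi HL)); apply: eq_dual_map => x.
by rewrite /O_act !(phiB HL) (phi2_br HL WI) phi2_T_rho.
Qed.

Local Notation sdbr := (sd_br br phi rho).
Local Notation sdphi := (sd_phi phi beta).
Local Notation r := (Tbar T - flip (Tbar T)).
Local Notation cobracket := (fun u => adT sdbr sdphi u r).

(* The semidirect product V |x g^* has V as its first block, while d^* is
   g^* (+) V; [swap_blocks] converts between the two orders. *)
Definition dual_sd_br (a b : 'rV[K]_(n + m)) : 'rV[K]_(n + m) :=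
  swap_blocks (semidirect_br O_br O_coact (swap_blocks a) (swap_blocks b)).

Definition dual_sd_phi (a : 'rV[K]_(n + m)) : 'rV[K]_(n + m) :=
  swap_blocks (semidirect_phi beta (dual_map phi) (swap_blocks a)).

Lemma tpair_r a b :
  tpair r a b = pairing (lsubmx b) (T (rsubmx a)) - pairing (lsubmx a) (T (rsubmx b)).
Proof. by rewrite tpairB tpair_flip !(tpair_Tbar _ _ lin_T). Qed.

Lemma tpair_cobracket x a b : tpair (cobracket x) a b = pairing (dual_sd_br a b) x.
Proof.
rewrite tpair_adT !tpair_r !lsubmx_dual_sd_phi !(rsubmx_dual_sd_phi HL HR).
rewrite !(lsubmx_dual_sd_ad HL HR WR) !(rsubmx_dual_sd_ad HL HR WR).
rewrite /dual_sd_br /swap_blocks /semidirect_br pairing_split !row_mxKl !row_mxKr.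
have lin_rho_circl xi : lin_map (rho_circ phi rho ^~ xi).
  exact: (lin_rhol (rho_circ_rep HL HR WR)).
rewrite /O_coact !pairingBl !(pairing_dual_map _ _ (lin_phi HL)).
rewrite !(pairing_dual_map _ _ (lin_brr HL _)) !(pairing_dual_map _ _ (lin_rho_circl _)).
rewrite !(pairing_dual_map _ _ (lin_O_act _)) ![pairing _ (rho_circ _ _ _ _)]pairingC.
rewrite !(pairing_rho_circ HR) /O_act /O_br !T_beta !WR !TN !(phiN HL) !pairingBr !pairingNr.
rewrite ![pairing (rho _ _) _]pairingC; ring.
Qed.

Lemma lin_cobracket : lin_map cobracket.
Proof.
move=> c x y /=; apply: tpair_inj => a b.
by rewrite tpair_cobracket tpairD tpairZ !tpair_cobracket pairingDr pairingZr.
Qed.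

Lemma dual_br_cobracket a b : dual_br cobracket a b = dual_sd_br a b.
Proof.
apply: pairing_bvec_inj => k.
by rewrite -tpair_cobracket !pairing_bvec mxE.
Qed.

Lemma dual_sd_phiE a : dual_map sdphi a = dual_sd_phi a.
Proof.
rewrite -[LHS]hsubmxK lsubmx_dual_sd_phi (rsubmx_dual_sd_phi HL HR).
by rewrite /dual_sd_phi /swap_blocks /semidirect_phi !row_mxKl !row_mxKr.
Qed.

Lemma r_phi_invariant : tmap sdphi id r = tmap id sdphi r.
Proof.
apply: tpair_inj => a b; rewrite !tpair_tmap !dual_map_id !tpair_r.
rewrite !lsubmx_dual_sd_phi !(rsubmx_dual_sd_phi HL HR).
by rewrite !(pairing_dual_map _ _ (lin_phi HL)) !T_beta.
Qed.

Lemma dual_HomLie : HomLie (dual_br cobracket) (dual_map sdphi).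
Proof.
apply: (HomLie_transport (@swap_blocksK _ _ _) dual_br_cobracket dual_sd_phiE).
- exact: lin_swap_blocks.
- exact: lin_swap_blocks.
- exact: semidirect_HomLie O_br_HomLie O_coact_rep.
Qed.

Lemma dual_weakly_inv : weakly_inv (dual_br cobracket) (dual_map sdphi).
Proof.
apply: (weakly_inv_transport (@swap_blocksK _ _ _) dual_br_cobracket dual_sd_phiE).
exact: semidirect_weakly_inv O_br_weakly_inv O_coact_weakly_inv O_coact_phi2.
Qed.

End OOperatorBialgebra.
Unset Implicit Arguments.
Set Strict Implicit.

Theorem corollary5p10 (K : fieldType) (n m : nat)
    (br : 'rV[K]_n -> 'rV[K]_n -> 'rV[K]_n) (phi : 'rV[K]_n -> 'rV[K]_n)
    (beta : 'rV[K]_m -> 'rV[K]_m) (rho : 'rV[K]_n -> 'rV[K]_m -> 'rV[K]_m)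
    (T : 'rV[K]_m -> 'rV[K]_n) :
  HomLie br phi -> weakly_inv br phi ->
  HomLieRep br phi beta rho -> weakly_inv_rep phi rho ->
  (forall x v, rho (phi x) (beta (beta v)) = rho (phi x) v) ->
  O_operator br phi beta rho T ->
  let r := Tbar T - flip (Tbar T) in
  coboundary_HLB (sd_br br phi rho) (sd_phi phi beta)
    (fun u => adT (sd_br br phi rho) (sd_phi phi beta) u r) r.
Proof.
move=> HL WI HR WR rho_phi_beta2 HO r.
have sd_HL := sd_HomLie HL HR WR.
have sd_WI := sd_weakly_inv HR WR rho_phi_beta2 WI.
have r_phi := r_phi_invariant HL HR HO.
split=> //; split.
- by split.
- exact: lin_cobracket HL HR WR HO.
- exact: dual_HomLie HL WI HR WR rho_phi_beta2 HO.
- exact: dual_weakly_inv HL WI HR WR rho_phi_beta2 HO.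
- by move=> x y; apply: (adT_cocycle sd_HL sd_WI r_phi).
Qed.
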